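(* Let $h>0$, $N,s\in\mathbb{N}$ with $s\ge1$, $\mu>0$, $\alpha,\beta\in[0,1/2]$, and let $L:\mathbb{R}^d\times\mathbb{R}^d\to\mathbb{R}$ be $C^1$. Fix control points $0=d_0<d_1<\dots<d_s=1$, Lagrange polynomials $\ell_\nu$ of degree $s$ with $\ell_\nu(d_i)=\delta_{\nu i}$, and a quadrature rule $(b_i,c_i)_{i=1}^r$ with $c_i\in[0,1]$. For $(q^0,\dots,q^s)\in(\mathbb{R}^d)^{s+1}$ define the polynomial $q(\tau)=\sum_{\nu=0}^s q^\nu\ell_\nu(\tau)$ and the discrete Lagrangian $$L_d(q^0,\dots,q^s)=h\sum_{i=1}^r b_i\,L\Big(\sum_{\nu=0}^s q^\nu\ell_\nu(c_i),\ \tfrac1h\sum_{\nu=0}^s q^\nu\dot\ell_\nu(c_i)\Big).$$ Consider unknowns $x_k^\nu,y_k^\nu\in\mathbb{R}^d$, $k=0,\dots,N-1$, $\nu=0,\dots,s$, subject to $x_k^s=x_{k+1}^0$, $y_k^s=y_{k+1}^0$ ($k=0,\dots,N-2$), and write $x_k:=x_k^0$, $y_k:=y_k^0$ for $k\le N-1$, $x_N:=x_{N-1}^s$, $y_N:=y_{N-1}^s$. Let $\gamma=\rho/\sigma$ with $\rho_0/\sigma_0>0$ (e.g. the BDF function $\gamma_p(z)=\sum_{j=1}^p\frac1j(1-z)^j$), let $\omega_n^{(a)}$ be the Taylor coefficients of $(\gamma(z)/h)^{-a}$, and set $\mathcal{J}_{-}^{a}x_k=\sum_{n=0}^{k}\omega_n^{(a)}x_{k-n}$,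 $\mathcal{J}_{+}^{a}y_k=\sum_{n=0}^{N-k}\omega_n^{(a)}y_{k+n}$. Define the action $$\mathcal{S}_d=\sum_{k=0}^{N-1}\big(L_d(x_k^0,\dots,x_k^s)+L_d(y_k^0,\dots,y_k^s)\big)-\mu h\sum_{k=0}^{N}\mathcal{J}^{-\alpha}_{-}x_k\cdot\mathcal{J}^{-\beta}_{+}y_k .$$ Suppose the following hold, with $D_i$ the gradient of $L_d$ with respect to its $i$-th argument: (i) $D_{s+1}L_d(x_{k-1}^0,\dots,x_{k-1}^s)+D_1L_d(x_k^0,\dots,x_k^s)-\mu h\,\mathcal{J}^{-(\alpha+\beta)}_{-}x_k^0=0$ for $k=1,\dots,N-1$; (ii) $D_iL_d(x_k^0,\dots,x_k^s)=0$ for $k=0,\dots,N-1$, $i=2,\dots,s$; (iii) $D_{s+1}L_d(y_{k-1}^0,\dots,y_{k-1}^s)+D_1L_d(y_k^0,\dots,y_k^s)-\mu h\,\mathcal{J}^{-(\alpha+\beta)}_{+}y_k^0=0$ for $k=1,\dots,N-1$; (iv) $D_iL_d(y_k^0,\dots,y_k^s)=0$ for $k=0,\dots,N-1$, $i=2,\dots,s$. Then for every family of variations $\delta x_k^\nu\in\mathbb{R}^d$ compatible with the transition condition ($\delta x_k^s=\delta x_{k+1}^0$) and with $\delta x_0^0=0$, $\delta x_{N-1}^s=0$, the derivative at $\epsilon=0$ of $\epsilon\mapsto\mathcal{S}_d$ evaluated at $(x_k^\nu+\epsilon\delta x_k^\nu,\ y_k^\nu+\epsilon\delta x_k^\nu)$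 vanishes; i.e. (i)–(iv) are sufficient conditions for extremals of $\mathcal{S}_d$ under restricted variations.
   Context: This is the higher-order (Galerkin) fractional variational integrator: the conservative part uses polynomial interpolation of degree $s$ on each interval $[kh,(k+1)h]$ with a quadrature rule, while the fractional part uses convolution quadrature on the main nodes only. Restricted variations: the same variation is applied to the doubled variables $x$ and $y$. The continuous model being discretized is $\frac{d}{dt}\partial_{\dot x}L-\partial_xL=-\mu D_-^{\alpha+\beta}x$. *)

From HB Require Import structures.
From mathcomp Require Import all_boot all_order all_algebra.
From mathcomp Require Import all_classical all_reals all_analysis.
Set Implicit Arguments. Unset Strict Implicit. Unset Printing Implicit Defensive.
Import Order.TTheory GRing.Theory Num.Theory.
Import numFieldNormedType.Exports.
Local Open Scope ring_scope.

Section Defs.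
Variable R : realType.
Variable d : nat.
Notation vec := 'rV[R]_d.

Definition dotv (u v : vec) : R := \sum_(j < d) u 0 j * v 0 j.

Definition Ld (h : R) (L : vec * vec -> R) (s : nat) (ell : nat -> {poly R})
    (r : nat) (b c : nat -> R) (q : nat -> vec) : R :=
  h * \sum_(1 <= i < r.+1)
        b i * L (\sum_(nu < s.+1) (ell nu).[c i] *: q nu,
                 h^-1 *: \sum_(nu < s.+1) (ell nu)^`().[c i] *: q nu).

(* gradient of F : (R^d)^{s+1} -> R w.r.t. its argument number nu
   (0-based, i.e. the paper's D_{nu+1}), componentwise via partial derivatives *)
Definition gradArg (F : (nat -> vec) -> R) (q : nat -> vec) (nu : nat) : vec :=
  \row_(j < d) ('D_(delta_mx 0 j : vec)
                  (fun z : vec => F (fun m => if m == nu then z else q m))) (q nu).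

Definition gam (rho sigma : {poly R}) (z : R) : R := rho.[z] / sigma.[z].

Definition omega (rho sigma : {poly R}) (h a : R) (n : nat) : R :=
  derive1n n (fun z : R => powR (gam rho sigma z / h) (- a)) 0 / (n`!)%:R.

Definition node (N s : nat) (x : nat -> nat -> vec) (k : nat) : vec :=
  if (k < N)%N then x k 0%N else x N.-1 s.

Definition Jminus (rho sigma : {poly R}) (h a : R) (X : nat -> vec) (k : nat) : vec :=
  \sum_(n < k.+1) omega rho sigma h a n *: X (k - n)%N.

Definition Jplus (rho sigma : {poly R}) (h a : R) (N : nat) (Y : nat -> vec) (k : nat) : vec :=
  \sum_(n < (N - k).+1) omega rho sigma h a n *: Y (k + n)%N.

Definition Sd (h mu alpha beta : R) (L : vec * vec -> R) (s : nat)
    (ell : nat -> {poly R}) (r : nat) (b c : nat -> R) (rho sigma : {poly R})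
    (N : nat) (x y : nat -> nat -> vec) : R :=
  \sum_(k < N) (Ld h L s ell r b c (x k) + Ld h L s ell r b c (y k))
  - mu * h * \sum_(k < N.+1)
       dotv (Jminus rho sigma h (- alpha) (node N s x) k)
            (Jplus rho sigma h (- beta) N (node N s y) k).

End Defs.

From HB Require Import structures.
From mathcomp Require Import all_boot all_order all_algebra.
From mathcomp Require Import all_classical all_reals all_analysis.
From mathcomp Require Import ring.
Set Implicit Arguments. Unset Strict Implicit. Unset Printing Implicit Defensive.
Import Order.TTheory GRing.Theory Num.Theory.
Import numFieldNormedType.Exports.
Local Open Scope ring_scope.

(* The first variation of S_d along (dx, dx) splits into a conservative part and the
   variation of the fractional coupling.  By (i)-(iv) the conservative part collapses onto
   the nodes: interior control points carry no gradient and the end-point gradients of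
   consecutive intervals add up at their shared node, leaving
   mu h sum_k (J_-^(-(a+b)) x_k + J_+^(-(a+b)) y_k) . dx_k.
   For the coupling, omega^(a) are the Taylor coefficients of (gamma/h)^(-a), so the Leibniz
   rule turns (gamma/h)^(-a) (gamma/h)^(-b) = (gamma/h)^(-(a+b)) into the convolution identity
   omega^(a+b) = omega^(a) * omega^(b), i.e. J_+^a J_+^b = J_+^(a+b).  Together with the
   summation by parts sum_k J_-^a u_k . v_k = sum_k u_k . J_+^a v_k, the variation of the
   coupling becomes the same sum, and the two cancel. *)

Section DotProduct.
Variables (R : realType) (d : nat).
Local Notation vec := 'rV[R]_d.

Lemma dotvC (u v : vec) : dotv u v = dotv v u.
Proof. by apply: eq_bigr => j _; rewrite mulrC. Qed.

Lemma dotvDl (u v w : vec) : dotv (u + v) w = dotv u w + dotv v w.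
Proof. by rewrite /dotv -big_split; apply: eq_bigr => j _; rewrite mxE mulrDl. Qed.

Lemma dotvZl (a : R) (u w : vec) : dotv (a *: u) w = a * dotv u w.
Proof. by rewrite /dotv mulr_sumr; apply: eq_bigr => j _; rewrite mxE mulrA. Qed.

Lemma dotv0l (w : vec) : dotv 0 w = 0.
Proof. by rewrite -(scale0r 0) dotvZl mul0r. Qed.

Lemma dotvDr (u v w : vec) : dotv w (u + v) = dotv w u + dotv w v.
Proof. by rewrite !(dotvC w) dotvDl. Qed.

Lemma dotvZr (a : R) (u w : vec) : dotv w (a *: u) = a * dotv w u.
Proof. by rewrite !(dotvC w) dotvZl. Qed.

Lemma dotv0r (w : vec) : dotv w 0 = 0.
Proof. by rewrite dotvC dotv0l. Qed.

Lemma dotv_suml (I : Type) (s : seq I) (P : pred I) (F : I -> vec) w :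
  dotv (\sum_(i <- s | P i) F i) w = \sum_(i <- s | P i) dotv (F i) w.
Proof. by elim/big_rec2: _ => [|i y1 y2 _ <-]; rewrite ?dotv0l ?dotvDl. Qed.

Lemma dotv_sumr (I : Type) (s : seq I) (P : pred I) (F : I -> vec) w :
  dotv w (\sum_(i <- s | P i) F i) = \sum_(i <- s | P i) dotv w (F i).
Proof. by rewrite dotvC dotv_suml; apply: eq_bigr => i _; rewrite dotvC. Qed.

End DotProduct.

Section TriangularSums.
Variable V : nmodType.

Lemma sum_antidiagonal (F : nat -> nat -> V) M :
  \sum_(k < M.+1) \sum_(n < k.+1) F n (k - n)%N =
  \sum_(n < M.+1) \sum_(m < (M - n).+1) F n m.
Proof.
elim: M => [|M IH]; first by rewrite !big_ord1.
rewrite big_ord_recr /= IH [RHS]big_ord_recr /= subnn big_ord1.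
rewrite [in RHS](eq_bigr (fun n : 'I_M.+1 => \sum_(m < (M - n).+1) F n m + F n (M.+1 - n)%N)); last first.
  by move=> n _; rewrite (subSn (ltnSE (ltn_ord n))) big_ord_recr.
rewrite big_split /= -addrA; congr (_ + _).
by rewrite big_ord_recr /= subnn.
Qed.

Lemma sum_triangle_widen (G : nat -> V) n M : (n <= M)%N ->
  \sum_(j < (M - n).+1) G j = \sum_(j < M.+1) (if (n + j <= M)%N then G j else 0).
Proof.
move=> nM; rewrite -big_mkcond (big_ord_widen M.+1 G) ?ltnS ?leq_subr //.
by apply: eq_bigl => j; rewrite ltnS leq_subRL.
Qed.

Lemma exchange_big_triangle (H : nat -> nat -> V) M :
  \sum_(n < M.+1) \sum_(j < (M - n).+1) H n j =
  \sum_(j < M.+1) \sum_(n < (M - j).+1) H n j.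
Proof.
under eq_bigr => n _ do rewrite (sum_triangle_widen (H n) (ltnSE (ltn_ord n))).
rewrite exchange_big /=; apply: eq_bigr => j _.
rewrite (sum_triangle_widen (H^~ j) (ltnSE (ltn_ord j))).
by apply: eq_bigr => n _; rewrite addnC.
Qed.

End TriangularSums.

Lemma sum_binomial_pascal (K : comNzRingType) (A B : nat -> K) n :
  \sum_(k < n.+1) 'C(n, k)%:R * (A k * B (n - k).+1) +
  \sum_(k < n.+1) 'C(n, k)%:R * (A k.+1 * B (n - k)%N) =
  \sum_(k < n.+2) 'C(n.+1, k)%:R * (A k * B (n.+1 - k)%N).
Proof.
rewrite [RHS]big_ord_recl /= bin0 subn0.
rewrite [in RHS](eq_bigr (fun k : 'I_n.+1 => 'C(n, k.+1)%:R * (A k.+1 * B (n - k)%N)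
   + 'C(n, k)%:R * (A k.+1 * B (n - k)%N))); last first.
  by move=> k _; rewrite /bump /= ?add1n binS natrD mulrDl subSS.
rewrite big_split /= [RHS]addrA; congr (_ + _).
rewrite big_ord_recl /= bin0 subn0; congr (_ + _).
rewrite [RHS]big_ord_recr /= bin_small // mul0r addr0.
by apply: eq_bigr => k _; rewrite /bump /= ?add1n subnSK.
Qed.

Section RealDerivatives.
Variable R : realType.
Implicit Types (f g : R -> R) (z : R).

Lemma derive1D f g z : derivable f z 1 -> derivable g z 1 ->
  derive1 (f + g) z = derive1 f z + derive1 g z.
Proof. by move=> df dg; rewrite derive1E (deriveD df dg) -!derive1E. Qed.

Lemma derive1M f g z : derivable f z 1 -> derivable g z 1 ->
  derive1 (f * g) z = f z * derive1 g z + derive1 f z * g z.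
Proof.
by move=> df dg; rewrite derive1E (deriveM df dg) -!derive1E [_ *: derive1 f z]mulrC.
Qed.

Lemma derive1V f z : f z != 0 -> derivable f z 1 ->
  derive1 (fun w => (f w)^-1) z = - ((f z)^-1 * ((f z)^-1 * derive1 f z)).
Proof.
move=> fz0 df; rewrite derive1E (deriveV fz0 df) -derive1E.
by rewrite /GRing.scale /= -exprVn expr2 mulNr mulrA.
Qed.

Lemma derivable_powR_comp f z a : 0 < f z -> derivable f z 1 ->
  derivable (fun w => powR (f w) a) z 1.
Proof.
move=> fz0 df; apply/derivable1_diffP.
apply: (@differentiable_comp _ _ _ _ f (fun x => powR x a)); first exact/derivable1_diffP.
by apply/derivable1_diffP/derivable_powR; rewrite in_itv /= fz0.
Qed.

Lemma derive1_powR_comp f z a : 0 < f z -> derivable f z 1 ->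
  derive1 (fun w => powR (f w) a) z = a * powR (f z) (a - 1) * derive1 f z.
Proof.
move=> fz0 df; have fz : f z \in `]0, +oo[ by rewrite in_itv /= fz0.
rewrite (derive1_comp (g := fun x => powR x a) df (derivable_powR fz)).
by rewrite (powR_derive1 a fz) mulrC.
Qed.

End RealDerivatives.

Section DerivableUpto.
Variables (R : realType) (U : set R).
Hypothesis openU : open U.
Implicit Types (f g : R -> R) (z : R).

Definition derivable_upto n f :=
  forall k, (k < n)%N -> forall z, U z -> derivable (derive1n k f) z 1.

Lemma derivable_upto0 f : derivable_upto 0 f.
Proof. by []. Qed.

Let nbhsU z : U z -> nbhs z U.
Proof. by move=> Uz; apply: open_nbhs_nbhs. Qed.

Lemma derive1n_eq_on k f g : (forall z, U z -> f z = g z) ->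
  forall z, U z -> derive1n k f z = derive1n k g z.
Proof.
move=> fg; elim: k => [|k IH] z Uz; first exact: fg.
rewrite !derive1nS !derive1E; apply: near_eq_derive.
exact: filterS (nbhsU Uz).
Qed.

Lemma derivable_upto_eq n f g : (forall z, U z -> f z = g z) ->
  derivable_upto n f -> derivable_upto n g.
Proof.
move=> fg df k kn z Uz; apply: near_eq_derivable (df k kn z Uz).
by apply: filterS (nbhsU Uz) => w; apply: derive1n_eq_on.
Qed.

Lemma derivable_uptoS n f : derivable_upto n.+1 f <->
  (forall z, U z -> derivable f z 1) /\ derivable_upto n (derive1 f).
Proof.
split=> [df|[df1 df]].
  split=> [|k kn]; first exact: (df 0%N).
  by rewrite -derive1Sn; apply: df.
by case=> [_|k kn]; [exact: df1 | rewrite derive1Sn; apply: df].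
Qed.

Lemma derivable_uptoW n f : derivable_upto n.+1 f -> derivable_upto n f.
Proof. by move=> df k kn; apply: df; apply: ltnW. Qed.

Lemma derivable_upto_cst n (a : R) : derivable_upto n (cst a).
Proof.
elim: n a => [|n IH] a; first exact: derivable_upto0.
apply/derivable_uptoS; split=> [z _|]; first exact: derivable_cst.
by apply: derivable_upto_eq (IH 0) => z _; rewrite derive1_cst.
Qed.

Lemma derivable_upto_horner n (p : {poly R}) : derivable_upto n (horner p).
Proof.
elim: n p => [|n IH] p; first exact: derivable_upto0.
apply/derivable_uptoS; split=> [z _|]; first exact: derivable_horner.
by apply: derivable_upto_eq (IH p^`()) => z _; rewrite derivE.
Qed.

Lemma derivable_uptoD n f g :
  derivable_upto n f -> derivable_upto n g -> derivable_upto n (f + g).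
Proof.
elim: n f g => [|n IH] f g; first by move=> _ _; exact: derivable_upto0.
move=> /derivable_uptoS[df1 df] /derivable_uptoS[dg1 dg].
apply/derivable_uptoS; split=> [z Uz|]; first exact: derivableD (df1 z Uz) (dg1 z Uz).
by apply: derivable_upto_eq (IH _ _ df dg) => z Uz; rewrite (derive1D (df1 z Uz) (dg1 z Uz)).
Qed.

Lemma derivable_uptoM n f g :
  derivable_upto n f -> derivable_upto n g -> derivable_upto n (f * g).
Proof.
elim: n f g => [|n IH] f g df dg; first exact: derivable_upto0.
have /derivable_uptoS[df1 df'] := df; have /derivable_uptoS[dg1 dg'] := dg.
apply/derivable_uptoS; split=> [z Uz|]; first exact: derivableM (df1 z Uz) (dg1 z Uz).
apply: (derivable_upto_eq (f := f * derive1 g + derive1 f * g)).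
  by move=> z Uz; rewrite (derive1M (df1 z Uz) (dg1 z Uz)).
apply: derivable_uptoD; first exact: IH (derivable_uptoW df) dg'.
exact: IH df' (derivable_uptoW dg).
Qed.

Lemma derivable_uptoV n f : (forall z, U z -> f z != 0) ->
  derivable_upto n f -> derivable_upto n (fun z => (f z)^-1).
Proof.
move=> f0; elim: n => [|n IH] df; first exact: derivable_upto0.
have /derivable_uptoS[df1 df'] := df; have dV := IH (derivable_uptoW df).
apply/derivable_uptoS; split=> [z Uz|]; first exact: derivableV (f0 z Uz) (df1 z Uz).
apply: (derivable_upto_eq
  (f := cst (-1) * ((fun z => (f z)^-1) * ((fun z => (f z)^-1) * derive1 f)))).
  by move=> z Uz; rewrite (derive1V (f0 z Uz) (df1 z Uz)) mulN1r.
apply: derivable_uptoM; first exact: derivable_upto_cst.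
exact: derivable_uptoM dV (derivable_uptoM dV df').
Qed.

Lemma derivable_upto_powR n f a : (forall z, U z -> 0 < f z) ->
  derivable_upto n f -> derivable_upto n (fun z => powR (f z) a).
Proof.
move=> f0; elim: n a => [|n IH] a df; first exact: derivable_upto0.
have /derivable_uptoS[df1 df'] := df.
apply/derivable_uptoS; split=> [z Uz|].
  exact: derivable_powR_comp (f0 z Uz) (df1 z Uz).
apply: (derivable_upto_eq
  (f := cst a * (fun z => powR (f z) (a - 1)) * derive1 f)).
  by move=> z Uz; rewrite (derive1_powR_comp _ (f0 z Uz) (df1 z Uz)).
apply: derivable_uptoM df'; apply: derivable_uptoM; first exact: derivable_upto_cst.
exact: IH (a - 1) (derivable_uptoW df).
Qed.

Lemma derive1nD_on n f g : derivable_upto n f -> derivable_upto n g ->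
  forall z, U z -> derive1n n (f + g) z = derive1n n f z + derive1n n g z.
Proof.
elim: n f g => [|n IH] f g; first by [].
move=> /derivable_uptoS[df1 df] /derivable_uptoS[dg1 dg] z Uz.
rewrite !derive1Sn -(IH _ _ df dg z Uz); apply: derive1n_eq_on Uz => w Uw.
by rewrite (derive1D (df1 w Uw) (dg1 w Uw)).
Qed.

Lemma derive1nM_on n f g : derivable_upto n f -> derivable_upto n g ->
  forall z, U z -> derive1n n (f * g) z =
  \sum_(k < n.+1) 'C(n, k)%:R * (derive1n k f z * derive1n (n - k) g z).
Proof.
elim: n f g => [|n IH] f g df dg z Uz; first by rewrite big_ord1 bin0 mul1r.
have /derivable_uptoS[df1 df'] := df; have /derivable_uptoS[dg1 dg'] := dg.
have dfW := derivable_uptoW df; have dgW := derivable_uptoW dg.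
have -> : derive1n n.+1 (f * g) z = derive1n n (f * derive1 g + derive1 f * g) z.
  rewrite derive1Sn; apply: derive1n_eq_on Uz => w Uw.
  by rewrite (derive1M (df1 w Uw) (dg1 w Uw)).
rewrite (derive1nD_on (derivable_uptoM dfW dg') (derivable_uptoM df' dgW) Uz).
rewrite (IH _ _ dfW dg' z Uz) (IH _ _ df' dgW z Uz).
rewrite -(sum_binomial_pascal (fun k => derive1n k f z) (fun k => derive1n k g z)).
by congr (_ + _); apply: eq_bigr => k _; rewrite -derive1Sn.
Qed.

Hypothesis U0 : U 0.

Definition taylor_coef f n := derive1n n f 0 / (n`!)%:R.

Lemma taylor_coef_eq_on f g n : (forall z, U z -> f z = g z) ->
  taylor_coef f n = taylor_coef g n.
Proof. by move=> fg; rewrite /taylor_coef (derive1n_eq_on n fg). Qed.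

Lemma taylor_coefM f g n : derivable_upto n f -> derivable_upto n g ->
  taylor_coef (f * g) n =
  \sum_(k < n.+1) taylor_coef f k * taylor_coef g (n - k).
Proof.
move=> df dg; rewrite /taylor_coef (derive1nM_on df dg U0) mulr_suml.
apply: eq_bigr => k _; have kn : (k <= n)%N by rewrite -ltnS.
rewrite -(bin_fact kn) !natrM; field.
by rewrite !pnatr_eq0 -!lt0n bin_gt0 kn !fact_gt0.
Qed.

End DerivableUpto.

Section FractionalWeights.
Variables (R : realType) (rho sigma : {poly R}) (h : R).
Hypotheses (h_gt0 : 0 < h) (gamma0_gt0 : 0 < rho`_0 / sigma`_0).

Let g z := gam rho sigma z / h.
Let U := interior [set z | 0 < g z].

Let openU : open U.
Proof. exact: open_interior. Qed.

Let g_gt0 z : U z -> 0 < g z.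
Proof. exact: nbhs_singleton. Qed.

(* g vanishes where sigma does, because x / 0 = 0. *)
Let sigma_neq0 z : 0 < g z -> sigma.[z] != 0.
Proof. by apply: contraTneq => s0; rewrite /g /gam s0 invr0 mulr0 mul0r ltxx. Qed.

Let U0 : U 0.
Proof.
have g0 : 0 < g 0 by rewrite /g /gam !horner_coef0 divr_gt0.
have cg : {for 0, continuous g}.
  apply: cvgM; last exact: cvg_cst.
  apply: cvgM; first exact: continuous_horner.
  by apply: cvgV; [exact: sigma_neq0 | exact: continuous_horner].
exact: cvgr_gt cg 0 g0.
Qed.

Let g_smooth n : derivable_upto U n g.
Proof.
apply: (derivable_upto_eq openU
  (f := horner rho * (fun z => (sigma.[z])^-1) * cst h^-1)) => [//|].
apply: (derivable_uptoM openU); last exact: derivable_upto_cst.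
apply: (derivable_uptoM openU); first exact: derivable_upto_horner.
apply: (derivable_uptoV openU) => [z Uz|]; first exact/sigma_neq0/g_gt0.
exact: derivable_upto_horner.
Qed.

Lemma omegaD a b p :
  omega rho sigma h (a + b) p =
  \sum_(n < p.+1) omega rho sigma h a n * omega rho sigma h b (p - n).
Proof.
pose P e z := powR (g z) (- e).
have PD : forall z, U z -> (P a * P b) z = P (a + b) z.
  by move=> z Uz; rewrite /P /= opprD powRD // (gt_eqF (g_gt0 Uz)) implybT.
rewrite /omega -/(taylor_coef (P (a + b)) p) -(taylor_coef_eq_on openU U0 p PD).
rewrite (taylor_coefM openU U0) /P //.
all: by apply: derivable_upto_powR; [exact: openU | exact: g_gt0 | exact: g_smooth].
Qed.

End FractionalWeights.

Section ConvolutionQuadrature.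
Variables (R : realType) (d : nat) (rho sigma : {poly R}) (h : R) (N : nat).
Local Notation vec := 'rV[R]_d.
Local Notation om := (omega rho sigma h).
Hypotheses (h_gt0 : 0 < h) (gamma0_gt0 : 0 < rho`_0 / sigma`_0).

Lemma Jminus_line a (X D : nat -> vec) (e : R) k :
  Jminus rho sigma h a (fun k => X k + e *: D k) k =
  Jminus rho sigma h a X k + e *: Jminus rho sigma h a D k.
Proof.
rewrite /Jminus scaler_sumr -big_split; apply: eq_bigr => n _.
by rewrite scalerDr !scalerA mulrC.
Qed.

Lemma Jplus_line a (Y D : nat -> vec) (e : R) k :
  Jplus rho sigma h a N (fun k => Y k + e *: D k) k =
  Jplus rho sigma h a N Y k + e *: Jplus rho sigma h a N D k.
Proof.
rewrite /Jplus scaler_sumr -big_split; apply: eq_bigr => n _.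
by rewrite scalerDr !scalerA mulrC.
Qed.

Lemma Jminus_adjoint a (X Y : nat -> vec) :
  \sum_(k < N.+1) dotv (Jminus rho sigma h a X k) (Y k) =
  \sum_(k < N.+1) dotv (X k) (Jplus rho sigma h a N Y k).
Proof.
pose F n m := om a n * dotv (X m) (Y (n + m)%N).
transitivity (\sum_(k < N.+1) \sum_(n < k.+1) F n (k - n)%N).
  apply: eq_bigr => k _; rewrite dotv_suml; apply: eq_bigr => n _.
  by rewrite dotvZl /F subnKC // (ltnSE (ltn_ord n)).
rewrite sum_antidiagonal exchange_big_triangle; apply: eq_bigr => m _.
by rewrite dotv_sumr; apply: eq_bigr => n _; rewrite dotvZr addnC.
Qed.

Lemma Jplus_comp a b (Y : nat -> vec) k :
  Jplus rho sigma h a N (Jplus rho sigma h b N Y) k =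
  Jplus rho sigma h (a + b) N Y k.
Proof.
pose G n m := (om a n * om b m) *: Y (k + (n + m))%N.
transitivity (\sum_(n < (N - k).+1) \sum_(m < ((N - k) - n).+1) G n m).
  rewrite /Jplus; apply: eq_bigr => n _.
  rewrite scaler_sumr subnDA; apply: eq_bigr => m _.
  by rewrite scalerA /G addnA.
rewrite -sum_antidiagonal; apply: eq_bigr => p _.
rewrite (omegaD h_gt0 gamma0_gt0) scaler_suml; apply: eq_bigr => n _.
by rewrite /G subnKC // (ltnSE (ltn_ord n)).
Qed.

Lemma sum_dotv_fractional_variation a b (X Y D : nat -> vec) :
  \sum_(k < N.+1) dotv (Jminus rho sigma h a D k) (Jplus rho sigma h b N Y k) +
  \sum_(k < N.+1) dotv (Jminus rho sigma h a X k) (Jplus rho sigma h b N D k) =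
  \sum_(k < N.+1) dotv (Jminus rho sigma h (a + b) X k
                        + Jplus rho sigma h (a + b) N Y k) (D k).
Proof.
rewrite !Jminus_adjoint.
under eq_bigr => k _ do rewrite Jplus_comp dotvC.
under [X in _ + X]eq_bigr => k _ do rewrite Jplus_comp.
rewrite -Jminus_adjoint -big_split /=; apply: eq_bigr => k _.
by rewrite dotvDl addrC.
Qed.

End ConvolutionQuadrature.

Lemma fst_sum (U V : nmodType) (I : Type) (r : seq I) (P : pred I) (F : I -> U * V) :
  (\sum_(i <- r | P i) F i).1 = \sum_(i <- r | P i) (F i).1.
Proof. by elim/big_rec2: _ => // i y1 y2 _ <-. Qed.

Lemma snd_sum (U V : nmodType) (I : Type) (r : seq I) (P : pred I) (F : I -> U * V) :
  (\sum_(i <- r | P i) F i).2 = \sum_(i <- r | P i) (F i).2.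
Proof. by elim/big_rec2: _ => // i y1 y2 _ <-. Qed.

Section DirectionalDerivatives.
Variables (R : realType) (V W : normedModType R).

Lemma derive_line (f : V -> W) a v :
  'D_v f a = 'D_1 (fun t : R => f (a + t *: v)) 0.
Proof.
rewrite /derive; set g1 := fun t => t^-1 *: _; set g2 := fun t => t^-1 *: _.
suff -> : g1 = g2 by [].
by apply/funext => t; rewrite /g1 /g2 /= scale0r !addr0 [_%:A]mulr1 (addrC (t *: v) a).
Qed.

Lemma is_derive_line (f : V -> W) a v : differentiable f a ->
  is_derive (0 : R) (1 : R) (fun t => f (a + t *: v)) ('D_v f a).
Proof.
move=> df; split; last by rewrite -derive_line.
have -> : (fun t : R => f (a + t *: v)) = (fun t : R => f (t *: v + a)).
  by apply/funext => t; rewrite addrC.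
exact/(derivable1P f a v).1/diff_derivable.
Qed.

Lemma is_derive_sum_pointwise n (F : 'I_n -> R -> W) (dF : 'I_n -> W) (x : R) :
  (forall i, is_derive x (1 : R) (F i) (dF i)) ->
  is_derive x (1 : R) (fun t => \sum_(i < n) F i t) (\sum_(i < n) dF i).
Proof. by move=> dFi; have := is_derive_sum dFi; rewrite fct_sumE. Qed.

End DirectionalDerivatives.

Section Nodes.
Variables (R : realType) (d : nat).
Local Notation vec := 'rV[R]_d.

Lemma is_derive_dotv_line (a u c v : vec) :
  is_derive (0 : R) (1 : R) (fun t => dotv (a + t *: u) (c + t *: v))
    (dotv u c + dotv a v).
Proof.
pose p := (dotv a c)%:P + (dotv u c + dotv a v) *: 'X + dotv u v *: 'X^2.
have -> : (fun t => dotv (a + t *: u) (c + t *: v)) = horner p.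
  by apply/funext => t; rewrite !hornerE !dotvDl !dotvDr !dotvZl !dotvZr /=; ring.
apply: is_derive_eq.
by rewrite !derivD derivC derivZ derivX derivZ derivXn !hornerE /=; ring.
Qed.

Lemma node_line N s (x w : nat -> nat -> vec) (e : R) :
  node N s (fun k nu => x k nu + e *: w k nu) =
  (fun k => node N s x k + e *: node N s w k).
Proof. by apply/funext => k; rewrite /node; case: ifP. Qed.

Lemma sum_dotv_nodes N s (G : nat -> nat -> vec) (Z : nat -> vec)
    (w : nat -> nat -> vec) :
  (1 <= s)%N ->
  (forall k i, (k < N)%N -> (1 <= i)%N -> (i < s)%N -> G k i = 0) ->
  (forall k, (1 <= k)%N -> (k < N)%N -> G k.-1 s + G k 0%N = Z k) ->
  (forall k, (k.+1 < N)%N -> w k s = w k.+1 0%N) ->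
  w 0%N 0%N = 0 -> w N.-1 s = 0 ->
  \sum_(k < N) \sum_(nu < s.+1) dotv (G k nu) (w k nu) =
  \sum_(k < N.+1) dotv (Z k) (node N s w k).
Proof.
case: s => [//|s] _ G_mid GZ w_cont w00 w_end.
have ends k : (k < N)%N -> \sum_(nu < s.+2) dotv (G k nu) (w k nu) =
    dotv (G k 0%N) (w k 0%N) + dotv (G k s.+1) (w k s.+1).
  move=> kN; rewrite big_ord_recl big_ord_recr /= big1 ?add0r // => i _.
  by rewrite G_mid ?dotv0l // ltnS ltn_ord.
case: N G_mid GZ w_cont w_end ends => [|N] G_mid GZ w_cont w_end ends.
  by rewrite big_ord0 big_ord1 /node /= w_end dotv0r.
rewrite (eq_bigr _ (fun (k : 'I_N.+1) _ => ends k (ltn_ord k))) big_split /=.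
rewrite big_ord_recl w00 dotv0r add0r.
rewrite [X in _ + X]big_ord_recr /= w_end dotv0r addr0 -big_split /=.
rewrite big_ord_recl /node /= w00 dotv0r add0r big_ord_recr /= ltnn w_end dotv0r addr0.
apply: eq_bigr => k _.
rewrite /bump /= ?add1n ltnS (ltn_ord k) w_cont; last by rewrite ltnS (ltn_ord k).
by rewrite -dotvDl addrC -(GZ k.+1) // ltnS ltn_ord.
Qed.

End Nodes.

Section DiscreteLagrangian.
Variables (R : realType) (d : nat).
Local Notation vec := 'rV[R]_d.
Variables (h : R) (L : vec * vec -> R) (s : nat) (ell : nat -> {poly R})
  (r : nat) (b c : nat -> R).
Hypothesis L_diff : forall z, differentiable L z.
Local Notation Ldq := (Ld h L s ell r b c).

(* [stage i q] is the argument (q(c_i), q'(c_i) / h) of L at the i-th quadrature node, for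
   the interpolating polynomial q = sum_nu q_nu ell_nu; [node_stage i nu] is the
   contribution of the control point q_nu. *)
Definition node_stage i nu (v : vec) : vec * vec :=
  ((ell nu).[c i] *: v, h^-1 *: ((ell nu)^`().[c i] *: v)).

Definition stage i (q : nat -> vec) : vec * vec :=
  \sum_(nu < s.+1) node_stage i nu (q nu).

Definition unit_dir nu (j : 'I_d) : nat -> vec :=
  fun m => if m == nu then delta_mx 0 j else 0.

Definition Ld_dir (q w : nat -> vec) : R :=
  h * \sum_(i < r) b i.+1 * 'D_(stage i.+1 w) L (stage i.+1 q).

Lemma LdE q : Ldq q = h * \sum_(i < r) b i.+1 * L (stage i.+1 q).
Proof.
rewrite /Ld big_add1 /= big_mkord; congr (h * _); apply: eq_bigr => i _.
congr (_ * L _); rewrite /stage; apply/eqP/andP; split; apply/eqP.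
  by rewrite fst_sum.
by rewrite snd_sum scaler_sumr.
Qed.

Lemma stage_line i (q w : nat -> vec) (e : R) :
  stage i (fun m => q m + e *: w m) = stage i q + e *: stage i w.
Proof.
rewrite /stage scaler_sumr -big_split; apply: eq_bigr => nu _.
by rewrite /node_stage; congr pair => /=; rewrite !scalerDr !scalerA;
  congr (_ + _ *: _); ring.
Qed.

Lemma is_derive_Ld_line (q w : nat -> vec) :
  is_derive (0 : R) (1 : R) (fun e => Ldq (fun m => q m + e *: w m)) (Ld_dir q w).
Proof.
under eq_fun => e do rewrite LdE.
apply: is_deriveZ; apply: is_derive_sum_pointwise => i.
under eq_fun => e do rewrite stage_line.
by apply: is_deriveZ; apply: is_derive_line.
Qed.

Lemma node_stage_sum i nu (v : vec) :
  node_stage i nu v = \sum_(j < d) v 0 j *: node_stage i nu (delta_mx 0 j).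
Proof.
rewrite /node_stage [in LHS](row_sum_delta v); apply/eqP/andP; split; apply/eqP.
  by rewrite fst_sum scaler_sumr; apply: eq_bigr => j _; rewrite /= !scalerA mulrC.
rewrite snd_sum !scaler_sumr; apply: eq_bigr => j _.
by rewrite /= !scalerA; congr (_ *: _); ring.
Qed.

Lemma stage_unit_dir i nu j : (nu < s.+1)%N ->
  stage i (unit_dir nu j) = node_stage i nu (delta_mx 0 j).
Proof.
move=> nu_s; rewrite /stage (bigD1 (Ordinal nu_s)) //= /unit_dir eqxx.
rewrite big1 ?addr0 // => m; rewrite -val_eqE /= => /negbTE ->.
by rewrite /node_stage !scaler0.
Qed.

Lemma stage_decomp i (w : nat -> vec) :
  stage i w = \sum_(nu < s.+1) \sum_(j < d) w nu 0 j *: stage i (unit_dir nu j).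
Proof.
apply: eq_bigr => nu _; rewrite node_stage_sum; apply: eq_bigr => j _.
by rewrite stage_unit_dir.
Qed.

Lemma gradArg_LdE q nu j : gradArg Ldq q nu 0 j = Ld_dir q (unit_dir nu j).
Proof.
rewrite /gradArg mxE derive_line.
rewrite -[RHS](@derive_val _ _ _ _ _ _ _ (is_derive_Ld_line q (unit_dir nu j))).
suff -> : (fun t : R => Ldq (fun m => if m == nu then q nu + t *: delta_mx 0 j else q m)) =
    (fun e : R => Ldq (fun m => q m + e *: unit_dir nu j m)) by [].
apply/funext => t; congr Ldq; apply/funext => m.
by rewrite /unit_dir; case: eqP => [->|_]; rewrite ?scaler0 ?addr0.
Qed.

Lemma Ld_dir_gradE q w :
  Ld_dir q w = \sum_(nu < s.+1) dotv (gradArg Ldq q nu) (w nu).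
Proof.
pose dL i nu j := h * b i.+1 * 'd L (stage i.+1 q) (stage i.+1 (unit_dir nu j)).
transitivity (\sum_(i < r) \sum_(nu < s.+1) \sum_(j < d) w nu 0 j * dL i nu j).
  rewrite /Ld_dir mulr_sumr; apply: eq_bigr => i _.
  rewrite deriveE // (stage_decomp _ w) linear_sum mulrA mulr_sumr; apply: eq_bigr => nu _.
  rewrite linear_sum mulr_sumr; apply: eq_bigr => j _.
  by rewrite linearZ /= /dL; exact: mulrCA.
rewrite exchange_big; apply: eq_bigr => nu _.
rewrite /dotv exchange_big; apply: eq_bigr => j _.
rewrite gradArg_LdE /Ld_dir [RHS]mulrC !mulr_sumr; apply: eq_bigr => i _.
by rewrite deriveE // /dL; ring.
Qed.

Lemma sum_Ld_dir_nodes N (q w : nat -> nat -> vec) (Z : nat -> vec) :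
  (1 <= s)%N ->
  (forall k i, (k < N)%N -> (1 <= i)%N -> (i < s)%N -> gradArg Ldq (q k) i = 0) ->
  (forall k, (1 <= k)%N -> (k < N)%N ->
     gradArg Ldq (q k.-1) s + gradArg Ldq (q k) 0%N = Z k) ->
  (forall k, (k.+1 < N)%N -> w k s = w k.+1 0%N) ->
  w 0%N 0%N = 0 -> w N.-1 s = 0 ->
  \sum_(k < N) Ld_dir (q k) (w k) = \sum_(k < N.+1) dotv (Z k) (node N s w k).
Proof.
under eq_bigr => k _ do rewrite Ld_dir_gradE.
exact: (sum_dotv_nodes (G := fun k => gradArg Ldq (q k))).
Qed.

End DiscreteLagrangian.

Section DiscreteAction.
Variables (R : realType) (d : nat) (h mu alpha beta : R) (L : 'rV[R]_d * 'rV[R]_d -> R)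
  (s : nat) (ell : nat -> {poly R}) (r : nat) (b c : nat -> R)
  (rho sigma : {poly R}) (N : nat).
Local Notation vec := 'rV[R]_d.
Hypothesis L_diff : forall z, differentiable L z.
Local Notation Ld_dir := (Ld_dir h L s ell r b c).
Local Notation Jm a := (Jminus rho sigma h a).
Local Notation Jp a := (Jplus rho sigma h a N).

Lemma is_derive_Sd_line (x y u v : nat -> nat -> vec) :
  is_derive (0 : R) (1 : R)
    (fun e => Sd h mu alpha beta L s ell r b c rho sigma N
       (fun k nu => x k nu + e *: u k nu) (fun k nu => y k nu + e *: v k nu))
    (\sum_(k < N) (Ld_dir (x k) (u k) + Ld_dir (y k) (v k))
     - mu * h * \sum_(k < N.+1)
         (dotv (Jm (- alpha) (node N s u) k) (Jp (- beta) (node N s y) k)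
          + dotv (Jm (- alpha) (node N s x) k) (Jp (- beta) (node N s v) k))).
Proof.
under eq_fun => e.
  rewrite /Sd !node_line.
  under [X in _ * X]eq_bigr => k _ do rewrite Jminus_line Jplus_line.
  over.
apply: is_deriveB.
  apply: is_derive_sum_pointwise => k.
  by apply: is_deriveD; apply: is_derive_Ld_line.
apply: is_deriveZ.
by apply: is_derive_sum_pointwise => k; apply: is_derive_dotv_line.
Qed.

End DiscreteAction.

Theorem theorem5p2 (R : realType) (d : nat) (h mu alpha beta : R) (N s r : nat)
    (L : 'rV[R]_d * 'rV[R]_d -> R)
    (dpts : nat -> R) (ell : nat -> {poly R}) (b c : nat -> R)
    (rho sigma : {poly R})
    (x y dx : nat -> nat -> 'rV[R]_d) :
  0 < h -> (1 <= s)%N -> 0 < mu ->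
  0 <= alpha <= 2^-1 -> 0 <= beta <= 2^-1 ->
  (* L is C^1 *)
  (forall z, differentiable L z) ->
  (forall v, continuous (fun z => 'D_v L z)) ->
  (* control points 0 = d_0 < d_1 < ... < d_s = 1 *)
  dpts 0%N = 0 -> dpts s = 1 ->
  (forall i, (i < s)%N -> dpts i < dpts i.+1) ->
  (* Lagrange polynomials of degree s with ell_nu(d_i) = delta_{nu i} *)
  (forall nu, (nu <= s)%N -> size (ell nu) = s.+1) ->
  (forall nu i, (nu <= s)%N -> (i <= s)%N ->
     (ell nu).[dpts i] = (if nu == i then 1 else 0)) ->
  (* quadrature nodes in [0,1] *)
  (forall i, (1 <= i <= r)%N -> 0 <= c i <= 1) ->
  (* gamma = rho / sigma with rho_0 / sigma_0 > 0 *)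
  0 < rho`_0 / sigma`_0 ->
  (* transition conditions *)
  (forall k, (k.+1 < N)%N -> x k s = x k.+1 0%N) ->
  (forall k, (k.+1 < N)%N -> y k s = y k.+1 0%N) ->
  (* (i) *)
  (forall k, (1 <= k)%N -> (k < N)%N ->
     gradArg (Ld h L s ell r b c) (x k.-1) s
     + gradArg (Ld h L s ell r b c) (x k) 0%N
     - (mu * h) *: Jminus rho sigma h (- (alpha + beta)) (node N s x) k = 0) ->
  (* (ii) *)
  (forall k i, (k < N)%N -> (1 <= i)%N -> (i < s)%N ->
     gradArg (Ld h L s ell r b c) (x k) i = 0) ->
  (* (iii) *)
  (forall k, (1 <= k)%N -> (k < N)%N ->
     gradArg (Ld h L s ell r b c) (y k.-1) s
     + gradArg (Ld h L s ell r b c) (y k) 0%N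
     - (mu * h) *: Jplus rho sigma h (- (alpha + beta)) N (node N s y) k = 0) ->
  (* (iv) *)
  (forall k i, (k < N)%N -> (1 <= i)%N -> (i < s)%N ->
     gradArg (Ld h L s ell r b c) (y k) i = 0) ->
  (* admissible variations *)
  (forall k, (k.+1 < N)%N -> dx k s = dx k.+1 0%N) ->
  dx 0%N 0%N = 0 -> dx N.-1 s = 0 ->
  is_derive (0 : R) (1 : R)
    (fun eps : R => Sd h mu alpha beta L s ell r b c rho sigma N
        (fun k nu => x k nu + eps *: dx k nu)
        (fun k nu => y k nu + eps *: dx k nu))
    0.
Proof.
move=> h_gt0 s_ge1 _ _ _ L_diff _ _ _ _ _ _ _ gamma0_gt0 _ _ hi hii hiii hiv
  dx_cont dx00 dx_end.
apply: is_derive_eq; first exact: is_derive_Sd_line.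
pose J_x k := (mu * h) *: Jminus rho sigma h (- (alpha + beta)) (node N s x) k.
pose J_y k := (mu * h) *: Jplus rho sigma h (- (alpha + beta)) N (node N s y) k.
rewrite big_split /= (sum_Ld_dir_nodes L_diff (Z := J_x)) //; last first.
  by move=> k k1 kN; apply/subr0_eq/hi.
rewrite (sum_Ld_dir_nodes L_diff (Z := J_y)) //; last first.
  by move=> k k1 kN; apply/subr0_eq/hiii.
rewrite [X in _ * X]big_split /= (sum_dotv_fractional_variation _ h_gt0 gamma0_gt0).
rewrite -opprD -big_split mulr_sumr -sumrB big1 // => k _.
by rewrite /= /J_x /J_y !dotvZl dotvDl mulrDr subrr.
Qed.
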